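(* Fix $\tilde\mu:\mathcal X\times\{0,1\}\to[0,1]$, $\tilde e:\mathcal X\to[\bar e,1-\bar e]$ for some $\bar e>0$, and measurable $\tilde\eta_1,\dots,\tilde\eta_m:\mathcal X\to\mathbb R$, such that $\tilde\mu=\mu$ or $\tilde e=e$. Let $\kappa_\ell=1$ if $\tilde\eta_\ell=\eta_\ell$ and $\kappa_\ell=0$ otherwise. Then, writing $\Lambda=E_P[\phi^\rho_{g_0,\dots,g_m}(X,A,Y;\tilde e,\tilde\mu,\tilde\eta_1,\dots,\tilde\eta_m)]$: (i) if $\kappa_1=\dots=\kappa_m=1$, then $\Lambda=\mathrm{AHE}^\rho_{g_0,\dots,g_m}$; (ii) if $\rho_\ell=+1$ whenever $\kappa_\ell=0$, then $\Lambda\ge\mathrm{AHE}^\rho_{g_0,\dots,g_m}$; (iii) if $\rho_\ell=-1$ whenever $\kappa_\ell=0$, then $\Lambda\le\mathrm{AHE}^\rho_{g_0,\dots,g_m}$.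
   Context: Observed data $(X,A,Y)\sim P$ on $\mathcal X\times\{0,1\}\times\{0,1\}$; $e(x)=P(A=1\mid X=x)\in[\bar e,1-\bar e]$, $\mu(x,a)=E_P[Y\mid X=x,A=a]$. Fix $m\in\mathbb N$, $\rho\in\{-1,+1\}^m$, measurable $g_\ell=(g_\ell^{(0)},g_\ell^{(1)},g_\ell^{(2)}):\mathcal X\to[-1,1]^3$, $\ell=0,\dots,m$; $\eta_\ell(x)=g_\ell^{(0)}(x)\mu(x,0)+g_\ell^{(1)}(x)\mu(x,1)+g_\ell^{(2)}(x)$; $$\mathrm{AHE}^\rho_{g_0,\dots,g_m}=E_P\Big[g_0^{(0)}(X)\mu(X,0)+g_0^{(1)}(X)\mu(X,1)+g_0^{(2)}(X)+\sum_{\ell=1}^m\rho_\ell\min\{0,\eta_\ell(X)\}\Big].$$ For nuisances $\check e,\check\mu,\check\eta_\ell$, with $\check\zeta^{(a)}(X)=g_0^{(a)}(X)+\sum_{\ell=1}^m\rho_\ell\mathbb 1\{\check\eta_\ell(X)\le0\}g_\ell^{(a)}(X)$ ($a=0,1,2$), $$\phi^\rho_{g_0,\dots,g_m}(X,A,Y;\check e,\check\mu,\check\eta_1,\dots,\check\eta_m)=\check\zeta^{(2)}(X)+\check\zeta^{(0)}(X)\frac{(A-\check e(X))\check\mu(X,0)+(1-A)Y}{1-\check e(X)}+\check\zeta^{(1)}(X)\frac{(\check e(X)-A)\check\mu(X,1)+AY}{\check e(X)}.$$ *)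

From HB Require Import structures.
From mathcomp Require Import all_boot all_order all_algebra.
From mathcomp Require Import all_classical all_reals all_analysis.
Set Implicit Arguments. Unset Strict Implicit. Unset Printing Implicit Defensive.
Import Order.TTheory GRing.Theory Num.Theory.
Local Open Scope ring_scope.

(* The law P of (X,A,Y) on 𝒳 × {0,1} × {0,1} is disintegrated as
   P(dx, a, y) = PX(dx) * P(A=a | X=x) * P(Y=y | X=x, A=a),
   with e(x) = P(A=1|X=x) and mu(x,a) = E[Y | X=x, A=a] = P(Y=1|X=x,A=a).
   Booleans encode {0,1}: false = 0, true = 1. *)

Section Defs.
Context {d : measure_display} {T : measurableType d} {R : realType}.

Definition pA (e : T -> R) (x : T) (a : bool) : R := if a then e x else 1 - e x.
Definition pY (mu : T -> bool -> R) (x : T) (a y : bool) : R :=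
  if y then mu x a else 1 - mu x a.

Definition EP (PX : probability T R) (e : T -> R) (mu : T -> bool -> R)
  (f : T -> bool -> bool -> R) : \bar R :=
  (\int[PX]_x (\sum_(a <- [:: false; true]) \sum_(y <- [:: false; true])
      pA e x a * pY mu x a y * f x a y)%:E)%E.

Definition eta_l (g0 g1 g2 : nat -> T -> R) (mu : T -> bool -> R) (l : nat) (x : T) : R :=
  g0 l x * mu x false + g1 l x * mu x true + g2 l x.

Definition AHE (PX : probability T R) (e : T -> R) (mu : T -> bool -> R)
  (m : nat) (rho : nat -> R) (g0 g1 g2 : nat -> T -> R) : \bar R :=
  EP PX e mu (fun x _ _ =>
    g0 0%N x * mu x false + g1 0%N x * mu x true + g2 0%N x
    + \sum_(1 <= l < m.+1) rho l * Num.min 0 (eta_l g0 g1 g2 mu l x)).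

Definition zeta (m : nat) (rho : nat -> R) (ga : nat -> T -> R)
  (etac : nat -> T -> R) (x : T) : R :=
  ga 0%N x + \sum_(1 <= l < m.+1) rho l * ((etac l x <= 0)%R : bool)%:R * ga l x.

Definition phi (m : nat) (rho : nat -> R) (g0 g1 g2 : nat -> T -> R)
  (ec : T -> R) (muc : T -> bool -> R) (etac : nat -> T -> R)
  (x : T) (a y : bool) : R :=
  zeta m rho g2 etac x
  + zeta m rho g0 etac x * (((a%:R - ec x) * muc x false + (1 - a%:R) * y%:R)
                             / (1 - ec x))
  + zeta m rho g1 etac x * (((ec x - a%:R) * muc x true + a%:R * y%:R) / ec x).

End Defs.

From HB Require Import structures.
From mathcomp Require Import all_boot all_order all_algebra.
From mathcomp Require Import all_classical all_reals all_analysis.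
From mathcomp Require Import ring lra.
Import Order.TTheory GRing.Theory Num.Theory.
Local Open Scope ring_scope.

(* Conditionally on X = x, the augmented inverse-propensity terms of phi have
   mean mu(x,0) and mu(x,1) as soon as one of the two nuisances is correct, so
   E[phi | X] = zeta^(2) + zeta^(0) mu(X,0) + zeta^(1) mu(X,1), which regroups
   as eta_0 + sum_l rho_l 1{eta~_l <= 0} eta_l.  The AHE integrand is
   eta_0 + sum_l rho_l min(0, eta_l), and 1{y <= 0} y = min(0, y) while
   c y >= min(0, y) for every c in {0,1}: each term agrees when eta~_l = eta_l
   and otherwise moves in the direction of rho_l. *)

Section integral_monotonicity.
Context d (T : measurableType d) (R : realType) (mu : {measure set T -> \bar R}).
Local Open Scope ereal_scope.

(* No measurability is needed: a nonnegative integral is a supremum over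
   simple functions below the integrand. *)
Lemma ge0_le_integralT (f g : T -> \bar R) :
  (forall x, 0 <= f x) -> (forall x, f x <= g x) ->
  \int[mu]_x f x <= \int[mu]_x g x.
Proof.
move=> f0 fg; have g0 x : 0 <= g x by exact: le_trans (f0 x) (fg x).
rewrite (ge0_integralTE _ f0) (ge0_integralTE _ g0).
apply: ge_ereal_sup => _ [h hf <-]; apply: ereal_sup_ubound; exists h => //.
by move=> x; exact: le_trans (hf x) (fg x).
Qed.

Lemma le_integralT (f g : T -> \bar R) :
  (forall x, f x <= g x) -> \int[mu]_x f x <= \int[mu]_x g x.
Proof.
move=> fg; rewrite integralE [leRHS]integralE.
apply: leeB; apply: ge0_le_integralT => x.
- by rewrite funeposE le_max lexx orbT.
- by rewrite !funeposE ge_max !le_max fg lexx orbT.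
- by rewrite funenegE le_max lexx orbT.
- by rewrite !funenegE ge_max !le_max leeN2 fg lexx orbT.
Qed.

End integral_monotonicity.

Lemma bernoulli2_mean_cst (R : comPzRingType) (e c : R) (m : bool -> R) :
  \sum_(a <- [:: false; true]) \sum_(y <- [:: false; true])
    (if a then e else 1 - e) * (if y then m a else 1 - m a) * c = c.
Proof. by rewrite !big_cons !big_nil /=; ring. Qed.

(* Double robustness of the AIPW pseudo-outcomes: the propensity t and the
   outcome regression u are plugged in, e and m are the true ones. *)
Lemma aipw_cond_mean (R : fieldType) (e t z0 z1 z2 : R) (u m : bool -> R) :
  t != 0 -> 1 - t != 0 -> u = m \/ t = e ->
  \sum_(a <- [:: false; true]) \sum_(y <- [:: false; true])
    (if a then e else 1 - e) * (if y then m a else 1 - m a) *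
    (z2 + z0 * (((a%:R - t) * u false + (1 - a%:R) * y%:R) / (1 - t))
        + z1 * (((t - a%:R) * u true + a%:R * y%:R) / t))
  = z2 + z0 * m false + z1 * m true.
Proof.
move=> t0 t1 robust; rewrite !big_cons !big_nil /=.
by case: robust => [->|te]; [|subst t]; field; apply/andP.
Qed.

Lemma min0_indicatorE (R : realDomainType) (y : R) :
  Num.min 0 y = ((y <= 0)%R : bool)%:R * y.
Proof. by case: lerP; rewrite ?mul1r ?mul0r. Qed.

Lemma min0_le_boolM (R : realDomainType) (c : bool) (y : R) :
  Num.min 0 y <= c%:R * y.
Proof. by case: c; rewrite ?mul1r ?mul0r ge_min lexx ?orbT. Qed.

Section lemma5_integrands.
Context d (T : measurableType d) (R : realType).
Variables (PX : probability T R) (e : T -> R) (mu : T -> bool -> R).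
Variables (m : nat) (rho : nat -> R) (g0 g1 g2 : nat -> T -> R).

Local Notation eta := (eta_l g0 g1 g2 mu).

Lemma zeta_regroup (etac : nat -> T -> R) x :
  zeta m rho g2 etac x + zeta m rho g0 etac x * mu x false
    + zeta m rho g1 etac x * mu x true
  = eta 0 x + \sum_(1 <= l < m.+1) rho l * ((etac l x <= 0)%R : bool)%:R * eta l x.
Proof.
rewrite /zeta /eta_l.
have -> : \sum_(1 <= l < m.+1) rho l * ((etac l x <= 0)%R : bool)%:R *
      (g0 l x * mu x false + g1 l x * mu x true + g2 l x)
    = (\sum_(1 <= l < m.+1) rho l * ((etac l x <= 0)%R : bool)%:R * g0 l x) * mu x false
    + (\sum_(1 <= l < m.+1) rho l * ((etac l x <= 0)%R : bool)%:R * g1 l x) * mu x true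
    + \sum_(1 <= l < m.+1) rho l * ((etac l x <= 0)%R : bool)%:R * g2 l x.
  by rewrite !big_distrl -!big_split; apply: eq_bigr => l _ /=; ring.
ring.
Qed.

Lemma EP_phiE (et : T -> R) (mut : T -> bool -> R) (etat : nat -> T -> R) :
  (forall x, et x != 0) -> (forall x, 1 - et x != 0) -> mut = mu \/ et = e ->
  EP PX e mu (phi m rho g0 g1 g2 et mut etat)
  = (\int[PX]_x (eta 0 x
       + \sum_(1 <= l < m.+1) rho l * ((etat l x <= 0)%R : bool)%:R * eta l x)%:E)%E.
Proof.
move=> et0 et1 robust; apply: eq_integral => x _; congr EFin.
rewrite /pA /pY /phi aipw_cond_mean ?zeta_regroup //.
by case: robust => ->; [left | right].
Qed.

Lemma AHE_integralE :
  AHE PX e mu m rho g0 g1 g2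
  = (\int[PX]_x (eta 0 x + \sum_(1 <= l < m.+1) rho l * Num.min 0 (eta l x))%:E)%E.
Proof. by apply: eq_integral => x _; rewrite /pA /pY bernoulli2_mean_cst. Qed.

End lemma5_integrands.

Theorem lemma5 (d : measure_display) (T : measurableType d) (R : realType)
  (PX : probability T R) (e : T -> R) (mu : T -> bool -> R) (ebar : R)
  (m : nat) (rho : nat -> R) (g0 g1 g2 : nat -> T -> R)
  (et : T -> R) (mut : T -> bool -> R) (etat : nat -> T -> R) (ebart : R) :
  (* standing assumptions on P *)
  0 < ebar ->
  (forall x, ebar <= e x <= 1 - ebar) ->
  measurable_fun setT e ->
  (forall x a, 0 <= mu x a <= 1) ->
  (forall a, measurable_fun setT (fun x => mu x a)) ->
  (forall l, (1 <= l <= m)%N -> rho l = 1 \/ rho l = -1) ->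
  (forall l, (l <= m)%N ->
     [/\ measurable_fun setT (g0 l), measurable_fun setT (g1 l),
         measurable_fun setT (g2 l) &
         forall x, [/\ -1 <= g0 l x <= 1, -1 <= g1 l x <= 1 & -1 <= g2 l x <= 1]]) ->
  (* nuisances *)
  (forall x a, 0 <= mut x a <= 1) ->
  (forall a, measurable_fun setT (fun x => mut x a)) ->
  0 < ebart ->
  (forall x, ebart <= et x <= 1 - ebart) ->
  measurable_fun setT et ->
  (forall l, (1 <= l <= m)%N -> measurable_fun setT (etat l)) ->
  (mut = mu \/ et = e) ->
  let Lambda := EP PX e mu (phi m rho g0 g1 g2 et mut etat) in
  let ahe := AHE PX e mu m rho g0 g1 g2 in
  [/\ ((forall l, (1 <= l <= m)%N -> etat l = eta_l g0 g1 g2 mu l) ->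
        Lambda = ahe),
      ((forall l, (1 <= l <= m)%N -> etat l <> eta_l g0 g1 g2 mu l -> rho l = 1) ->
        (ahe <= Lambda)%E) &
      ((forall l, (1 <= l <= m)%N -> etat l <> eta_l g0 g1 g2 mu l -> rho l = -1) ->
        (Lambda <= ahe)%E)].
Proof.
move=> _ _ _ _ _ _ _ _ _ ebart0 het _ _ robust Lambda ahe.
have et0 x : et x != 0 by case/andP: (het x) => ? _; apply/lt0r_neq0; lra.
have et1 x : 1 - et x != 0 by case/andP: (het x) => _ ?; apply/lt0r_neq0; lra.
rewrite /Lambda /ahe EP_phiE // AHE_integralE.
set eta := eta_l g0 g1 g2 mu.
have correct_term l x : etat l = eta l ->
    rho l * Num.min 0 (eta l x) = rho l * ((etat l x <= 0)%R : bool)%:R * eta l x.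
  by move=> ->; rewrite min0_indicatorE mulrA.
split=> [kappa | kappa | kappa].
- apply: eq_integral => x _; congr (_ + _)%:E.
  by apply: eq_big_nat => l /[!ltnS] ml; rewrite correct_term ?kappa.
- apply: le_integralT => x; rewrite lee_fin lerD2l.
  apply: ler_sum_nat => l /[!ltnS] ml.
  have [/correct_term -> //|wrong] := pselect (etat l = eta l).
  by rewrite (kappa l ml wrong) !mul1r min0_le_boolM.
- apply: le_integralT => x; rewrite lee_fin lerD2l.
  apply: ler_sum_nat => l /[!ltnS] ml.
  have [/correct_term -> //|wrong] := pselect (etat l = eta l).
  by rewrite (kappa l ml wrong) !mulN1r mulNr lerN2 min0_le_boolM.
Qed.
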